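(* Let $n\ge3$, $\ell>0$, $\alpha\ge(n-2)\ell$, $S=\alpha I_n+\ell\mathbf{1}_n\mathbf{1}_n^\top$, and let $P\ne0$ be a real symmetric diagonally dominant $n\times n$ matrix with nonnegative entries. Let $Q=S^{-1}PS^{-1}$. Then $Q_{ii}-\sum_{j\ne i}Q_{ij}>0$ for every $i=1,\dots,n$.
   Context: For a real matrix $P$, $\Delta_i(P)=|P_{ii}|-\sum_{j\ne i}|P_{ij}|$; $P$ is diagonally dominant if $\Delta_i(P)\ge0$ for all $i$. *)

From HB Require Import structures.
From mathcomp Require Import all_boot all_order all_algebra.
Set Implicit Arguments. Unset Strict Implicit. Unset Printing Implicit Defensive.
Import Order.TTheory GRing.Theory Num.Theory.
Local Open Scope ring_scope.

Definition Delta (R : realFieldType) (n : nat) (P : 'M[R]_n) (i : 'I_n) : R :=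
  `|P i i| - \sum_(j < n | j != i) `|P i j|.

Definition diag_dominant (R : realFieldType) (n : nat) (P : 'M[R]_n) : Prop :=
  forall i : 'I_n, 0 <= Delta P i.

(* Write J for the all-ones matrix.  Since J *m J = n J, the matrix
   S = alpha I + l J is inverted by S^-1 = alpha^-1 (I - c J) with
   c = l / (alpha + n l), so Q = alpha^-2 (I - c J) P (I - c J).  For a
   symmetric P with row sums r_k and total sum s, the entries of the
   congruence (I - c J) P (I - c J) are P_ab - c (r_a + r_b) + c^2 s, hence
   the row excess Q_ii - sum_(j <> i) Q_ij is alpha^-2 times an explicit
   expression in x = P_ii, y = sum_(j <> i) P_ij, s, c and n.
   Diagonal dominance, nonnegativity and symmetry of P give y <= x and
   x + 3 y <= s (every other row sum r_k is at least 2 P_ki), and P <> 0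
   gives s > 0.  A final inequality over an ordered field, valid whenever
   0 < c, c n < 1 and n >= 3, shows that this expression is positive. *)

From HB Require Import structures.
From mathcomp Require Import all_boot all_order all_algebra.
From mathcomp Require Import ring lra.
Import Order.TTheory GRing.Theory Num.Theory.
Set Implicit Arguments. Unset Strict Implicit. Unset Printing Implicit Defensive.
Local Open Scope ring_scope.

Definition row_sum (R : nmodType) (n : nat) (A : 'M[R]_n) (i : 'I_n) : R :=
  \sum_(j < n) A i j.

Definition total_sum (R : nmodType) (n : nat) (A : 'M[R]_n) : R :=
  \sum_(i < n) row_sum A i.

Definition row_excess (R : zmodType) (n : nat) (A : 'M[R]_n) (i : 'I_n) : R :=
  A i i - \sum_(j < n | j != i) A i j.

Lemma row_sum_split (R : nmodType) (n : nat) (A : 'M[R]_n) i :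
  row_sum A i = A i i + \sum_(j < n | j != i) A i j.
Proof. by rewrite /row_sum (bigD1 i). Qed.

Lemma row_excessZ (R : pzRingType) (n : nat) (a : R) (A : 'M[R]_n) i :
  row_excess (a *: A) i = a * row_excess A i.
Proof.
rewrite /row_excess mulrBr mulr_sumr !mxE; congr (_ - _).
by apply: eq_bigr => j _; rewrite mxE.
Qed.

Lemma row_excessE (R : comPzRingType) (n : nat) (A : 'M[R]_n) i :
  row_excess A i = 2%:R * A i i - row_sum A i.
Proof. by rewrite /row_excess row_sum_split; ring. Qed.

Lemma const1_mul_const1 (R : comPzRingType) (n : nat) :
  (const_mx 1 : 'M[R]_n) *m const_mx 1 = n%:R *: (const_mx 1 : 'M[R]_n).
Proof.
apply/matrixP=> i j; rewrite !mxE.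
under eq_bigr do rewrite !mxE mulr1.
by rewrite sumr_const card_ord mulr1.
Qed.

(* Sherman-Morrison for a scalar matrix plus a multiple of the all-ones
   matrix: alpha I + l J is inverted by alpha^-1 (I - c J). *)
Lemma invmx_scalar_add_const (R : fieldType) (n : nat) (alpha l : R) :
  alpha != 0 -> alpha + n%:R * l != 0 ->
  invmx (alpha%:M + l *: const_mx 1 : 'M[R]_n)
    = alpha^-1 *: (1%:M - (l / (alpha + n%:R * l)) *: const_mx 1).
Proof.
move=> alpha_neq0 m_neq0; set T := _ *: (_ - _ *: _).
have S_mul_T : (alpha%:M + l *: const_mx 1) *m T = 1%:M.
  rewrite /T -scalemxAr mulmxDl !mulmxBr !mulmx1 mul_scalar_mx.
  rewrite -!scalemxAl -!scalemxAr const1_mul_const1.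
  apply/matrixP => i j; rewrite !mxE.
  by case: (i == j); rewrite /= ?mulr1n ?mulr0n; field; apply/andP.
have [S_unit _] := mulmx1_unit S_mul_T.
by have := mulKmx S_unit T; rewrite S_mul_T mulmx1.
Qed.

Section Congruence.

Variables (R : comPzRingType) (n : nat) (P : 'M[R]_n).
Hypothesis P_sym : P^T = P.
Local Notation J := (const_mx 1 : 'M[R]_n).

Lemma symmetric_entry a b : P a b = P b a.
Proof. by rewrite -{1}P_sym mxE. Qed.

(* Multiplying by J replaces entries by row sums (column sums equal row
   sums by symmetry) or by the total sum. *)
Lemma const1_mulmx : J *m P = \matrix_(a, b) row_sum P b.
Proof.
apply/matrixP => a b; rewrite !mxE.
by apply: eq_bigr => k _; rewrite mxE mul1r symmetric_entry.
Qed.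

Lemma mulmx_const1 : P *m J = \matrix_(a, b) row_sum P a.
Proof.
by apply/matrixP => a b; rewrite !mxE; apply: eq_bigr => k _; rewrite mxE mulr1.
Qed.

Lemma const1_mulmx_const1 : J *m P *m J = \matrix_(a, b) total_sum P.
Proof.
rewrite const1_mulmx; apply/matrixP => a b; rewrite !mxE.
by apply: eq_bigr => k _; rewrite !mxE mulr1.
Qed.

Lemma entry_congr_const (c : R) a b :
  ((1%:M - c *: J) *m P *m (1%:M - c *: J)) a b
    = P a b - c * (row_sum P a + row_sum P b) + c ^+ 2 * total_sum P.
Proof.
rewrite mulmxBl mul1mx mulmxBr mulmx1 mulmxBl -!scalemxAr -!scalemxAl.
by rewrite const1_mulmx_const1 const1_mulmx mulmx_const1 !mxE; ring.
Qed.

Lemma row_excess_congr_const (c : R) i :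
  row_excess ((1%:M - c *: J) *m P *m (1%:M - c *: J)) i
    = 2%:R * (P i i - 2%:R * c * row_sum P i + c ^+ 2 * total_sum P)
      - (row_sum P i - c * (n%:R * row_sum P i + total_sum P)
         + c ^+ 2 * n%:R * total_sum P).
Proof.
rewrite row_excessE [row_sum _ i]/row_sum entry_congr_const.
under eq_bigr do rewrite entry_congr_const.
rewrite !big_split /= sumrN -!mulr_sumr big_split /= !sumr_const card_ord.
by rewrite -/(row_sum P i) -/(total_sum P); ring.
Qed.

End Congruence.

Section DiagonallyDominant.

Variables (R : realFieldType) (n : nat) (P : 'M[R]_n).
Hypothesis P_sym : P^T = P.
Hypothesis P_ge0 : forall a b, 0 <= P a b.
Hypothesis P_dd : diag_dominant P.

Lemma offdiag_sum_le_diag k : \sum_(j < n | j != k) P k j <= P k k.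
Proof.
have := P_dd k; rewrite /Delta ger0_norm // subr_ge0.
by under eq_bigr do rewrite ger0_norm //.
Qed.

Lemma offdiag_entry_le_half_row_sum i k : k != i -> 2%:R * P i k <= row_sum P k.
Proof.
move=> k_neq_i; rewrite row_sum_split symmetric_entry //.
have P_ki_le : P k i <= \sum_(j < n | j != k) P k j.
  by rewrite (bigD1 i) 1?eq_sym //= lerDl sumr_ge0.
have := offdiag_sum_le_diag k; lra.
Qed.

(* Summing the previous bound over the other rows. *)
Lemma diag_add_offdiag_le_total i :
  P i i + 3%:R * \sum_(j < n | j != i) P i j <= total_sum P.
Proof.
rewrite /total_sum [X in _ <= X](bigD1 i) // row_sum_split /=.
have : 2%:R * \sum_(j < n | j != i) P i j <= \sum_(k < n | k != i) row_sum P k.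
  by rewrite mulr_sumr; apply: ler_sum => k; exact: offdiag_entry_le_half_row_sum.
lra.
Qed.

Lemma total_sum_gt0 : P != 0 -> 0 < total_sum P.
Proof.
move=> P_neq0; rewrite lt_def sumr_ge0 ?andbT; last first.
  by move=> k _; apply: sumr_ge0.
apply: contra P_neq0 => /eqP s_eq0; apply/eqP/matrixP => a b; rewrite mxE.
have row_eq0 := psumr_eq0P (fun k _ => sumr_ge0 _ (fun j _ => P_ge0 k j)) s_eq0.
exact: psumr_eq0P (fun j _ => P_ge0 a j) (row_eq0 a isT) b isT.
Qed.

End DiagonallyDominant.

(* It is a positive combination of
   x - y, y and s - x - 3 y, and these cannot all vanish as s > 0. *)
Lemma congr_excess_gt0 (R : realFieldType) (c N x y s : R) :
  0 < c -> c * N < 1 -> 3%:R <= N -> 0 <= y -> y <= x ->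
  x + 3%:R * y <= s -> 0 < s ->
  0 < 2%:R * (x - 2%:R * c * (x + y) + c ^+ 2 * s)
      - ((x + y) - c * (N * (x + y) + s) + c ^+ 2 * N * s).
Proof.
move=> c_gt0 cN_lt1 N_ge3 y_ge0 y_le_x s_ge s_gt0.
have c_lt_third : 3%:R * c < 1 by nra.
pose A := 1 + c * N - 4%:R * c + c * (1 - c * N + 2%:R * c).
pose B := 2%:R * c * (N - 2%:R) * (1 - 2%:R * c).
pose E := c * (1 - c * N + 2%:R * c).
have A_gt0 : 0 < A by rewrite /A; nra.
have B_gt0 : 0 < B by rewrite /B; apply: mulr_gt0; [apply: mulr_gt0|]; nra.
have E_gt0 : 0 < E by rewrite /E; apply: mulr_gt0; lra.
have -> : 2%:R * (x - 2%:R * c * (x + y) + c ^+ 2 * s)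
      - ((x + y) - c * (N * (x + y) + s) + c ^+ 2 * N * s)
    = A * (x - y) + B * y + E * (s - x - 3%:R * y) by rewrite /A /B /E; ring.
have E_term_ge0 : 0 <= E * (s - x - 3%:R * y).
  by apply: mulr_ge0; [exact: ltW | lra].
have A_term_ge0 : 0 <= A * (x - y) by rewrite mulr_ge0 ?subr_ge0 // ltW.
have [y_eq0|y_neq0] := eqVneq y 0; last first.
  have : 0 < B * y by rewrite mulr_gt0 // lt0r y_neq0.
  lra.
rewrite y_eq0 !(mulr0, subr0, addr0) in E_term_ge0 A_term_ge0 *.
have [x_eq0|x_neq0] := eqVneq x 0.
  have : 0 < E * s by rewrite mulr_gt0.
  rewrite x_eq0 subr0 in E_term_ge0 *; lra.
have : 0 < A * x by rewrite mulr_gt0 // lt0r x_neq0 (le_trans y_ge0).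
lra.
Qed.

(* The hypothesis alpha >= (n - 2) l enters only through alpha > 0, which
   makes S invertible and gives 0 < c with c n < 1. *)
Theorem proposition5p4 (R : realFieldType) (n : nat) (l alpha : R)
  (P : 'M[R]_n)
  (hn : (3 <= n)%N) (hl : 0 < l) (halpha : (n - 2)%:R * l <= alpha)
  (hPsym : P^T = P) (hPdd : diag_dominant P)
  (hPnn : forall i j, 0 <= P i j) (hP0 : P != 0) :
  let S : 'M[R]_n := alpha%:M + l *: const_mx 1 in
  let Q : 'M[R]_n := invmx S *m P *m invmx S in
  forall i : 'I_n, 0 < Q i i - \sum_(j < n | j != i) Q i j.
Proof.
move=> S Q i.
have N_ge3 : 3%:R <= n%:R :> R by rewrite ler_nat.
have alpha_gt0 : 0 < alpha.
  have : 1 <= (n - 2)%:R :> R by rewrite ler1n subn_gt0.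
  nra.
have m_gt0 : 0 < alpha + n%:R * l by nra.
set c := l / (alpha + n%:R * l).
have c_gt0 : 0 < c by rewrite divr_gt0.
have cN_lt1 : c * n%:R < 1 by rewrite /c mulrAC ltr_pdivrMr // mul1r; lra.
have -> : Q = alpha^-1 ^+ 2 *:
    ((1%:M - c *: const_mx 1) *m P *m (1%:M - c *: const_mx 1)).
  by rewrite /Q /S invmx_scalar_add_const ?gt_eqF // -!scalemxAl -scalemxAr scalerA.
rewrite -/(row_excess _ i) row_excessZ mulr_gt0 ?exprn_gt0 ?invr_gt0 //.
rewrite row_excess_congr_const // row_sum_split.
apply: congr_excess_gt0 => //.
- exact: sumr_ge0.
- exact: offdiag_sum_le_diag.
- exact: diag_add_offdiag_le_total.
- exact: total_sum_gt0.
Qed.
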